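(* In the DGL-test-based classification setting described in the context, with $M\ge2$, $n,N\ge1$, $\alpha=N/n$ and $D=\min_{i\neq j}V(P_i,P_j)$, the classification error probability satisfies, for every prior $(\pi_1,\dots,\pi_M)$, $$\Pr[e_{\mathrm{CL}}]\le 2M\exp\!\Big(-n\Big(\frac{\alpha D^2}{2(2+\sqrt\alpha)^2}-\max\Big\{\frac{2\ln(M-1)}{n},\frac{|\mathcal X|\ln 2}{n}\Big\}\Big)\Big).$$
   Context: Setting: $\mathcal X$ is a finite alphabet and $P_1,\dots,P_M$ are (unknown) distributions on $\mathcal X$. For distributions $P,Q$ on $\mathcal X$, $V(P,Q)=\max_{F\subseteq\mathcal X}|P(F)-Q(F)|=\frac12\sum_{a}|P(a)-Q(a)|$. Training sequences $\vec t_i^{\,N}=(t_{i1},\dots,t_{iN})$, $i=1,\dots,M$, are mutually independent, with $\vec t_i^{\,N}$ i.i.d. from $P_i$; $T_i(a)=\frac1N\#\{k:t_{ik}=a\}$ is its empirical distribution, and $T_i(A)=\sum_{a\in A}T_i(a)$. Under hypothesis $\mathcal H_i$, the test sequence $\vec x^{\,n}=(x_1,\dots,x_n)$ is i.i.d. from $P_i$ and independent of the training sequences. Classifier (DGL test with nominal distributions $T_i$): let $\mathcal A=\{A_{k,l}:1\le k<l\le M\}$ with $A_{k,l}=\{a\in\mathcal X: T_k(a)\ge T_l(a)\}$, let $\mu_n(A)=\frac1n\#\{m: x_m\in A\}$, define the score $s_j=\max_{A\in\mathcal A}|T_j(A)-\mu_n(A)|$, and output any index $\hat\imath$ minimizing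 $s_j$ over $j$ (ties broken arbitrarily). Given a prior $\pi_i>0$, $\sum_i\pi_i=1$, the classification error probability is $\Pr[e_{\mathrm{CL}}]=\sum_{i=1}^M\pi_i\Pr[\hat\imath\neq i\mid\mathcal H_i]$, the probability taken over both the test and training sequences. *)

From mathcomp Require Import all_boot all_order all_algebra.
From mathcomp Require Import all_classical all_reals all_analysis.
Set Implicit Arguments. Unset Strict Implicit. Unset Printing Implicit Defensive.
Import Order.TTheory GRing.Theory Num.Theory.
Local Open Scope ring_scope.

Section DGL.
Variables (R : realType) (X : finType).

Definition is_distr (P : X -> R) := (forall a, 0 <= P a) /\ \sum_(a : X) P a = 1.

Definition tvdist (P Q : X -> R) : R := 2^-1 * \sum_(a : X) `|P a - Q a|.

(* D = min_{i <> j} V(P_i,P_j); the neutral element 1 is harmless since V <= 1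
   for distributions and M >= 2 makes the range nonempty *)
Definition Dmin (M : nat) (P : 'I_M -> X -> R) : R :=
  \big[Num.min/1]_(i < M) \big[Num.min/1]_(j < M | j != i) tvdist (P i) (P j).

Variables (M N n : nat).

Definition trainT := {ffun 'I_M -> {ffun 'I_N -> X}}.
Definition testT := {ffun 'I_n -> X}.

Definition Temp (t : trainT) (i : 'I_M) (a : X) : R :=
  #|[set k : 'I_N | t i k == a]|%:R / N%:R.
Definition TempS (t : trainT) (i : 'I_M) (A : {set X}) : R :=
  \sum_(a in A) Temp t i a.

Definition Aset (t : trainT) (k l : 'I_M) : {set X} :=
  [set a | Temp t l a <= Temp t k a].

Definition mun (x : testT) (A : {set X}) : R :=
  #|[set m : 'I_n | x m \in A]|%:R / n%:R.

(* score s_j = max_{k<l} |T_j(A_{k,l}) - mu_n(A_{k,l})| (all terms are >= 0) *)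
Definition score (t : trainT) (x : testT) (j : 'I_M) : R :=
  \big[Num.max/0]_(k < M) \big[Num.max/0]_(l < M | (k < l)%N)
     `|TempS t j (Aset t k l) - mun x (Aset t k l)|.

Definition DGL_rule (dec : trainT -> testT -> 'I_M) :=
  forall t x j, score t x (dec t x) <= score t x j.

Definition Ptrain (P : 'I_M -> X -> R) (t : trainT) : R :=
  \prod_(i < M) \prod_(k < N) P i (t i k).
Definition Ptest (P : 'I_M -> X -> R) (i : 'I_M) (x : testT) : R :=
  \prod_(m < n) P i (x m).

Definition err_CL (P : 'I_M -> X -> R) (pi : 'I_M -> R)
    (dec : trainT -> testT -> 'I_M) : R :=
  \sum_(i < M) pi i *
    \sum_(t : trainT) \sum_(x : testT)
       (if dec t x != i then Ptrain P t * Ptest P i x else 0).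

End DGL.

From mathcomp Require Import all_boot all_order all_algebra.
From mathcomp Require Import all_classical all_reals all_analysis.
From mathcomp Require Import ring lra.
Set Implicit Arguments. Unset Strict Implicit. Unset Printing Implicit Defensive.
Import Order.TTheory GRing.Theory Num.Theory.
Local Open Scope ring_scope.

(* If every training empirical distribution T_j is within d of P_j on all
   subsets of X, and under H_i the test empirical measure is within e of P_i
   on every set A_{k,l} and its complement, then the DGL test is correct: the
   true score s_i is below d + e, while for j <> i the empirical Scheffe set of
   the pair {i, j} separates T_i from T_j by more than 2d + 2e as soon as
   V(P_i, P_j) >= 4d + 2e, which forces s_j > d + e.  Hoeffding's inequality
   and a union bound over the M 2^|X| training events and the M (M - 1) test
   events give the error bound, and the choice e = sqrt(alpha) d with
   4d + 2e = D makes both exponents equal to n alpha D^2 / (2 (2 + sqrt alpha)^2). *)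

Section HoeffdingLemma.
Variables (R : realType) (p : R).
Hypothesis p01 : 0 <= p <= 1.

Definition bernoulli_mgf (y : R) : R := 1 - p + p * expR y.

Lemma bernoulli_mgf_gt0 (y : R) : 0 < bernoulli_mgf y.
Proof.
case/andP: p01 => p0 p1; have e := expR_gt0 y; rewrite /bernoulli_mgf.
case: (ltrP p 1) => hp; first by have := mulr_ge0 p0 (ltW e); lra.
have -> : p = 1 by lra.
by rewrite subrr add0r mul1r.
Qed.

Lemma is_derive_bernoulli_mgf (y : R) : is_derive y 1 bernoulli_mgf (p * expR y).
Proof. by apply: is_derive_eq; rewrite add0r mul1r. Qed.

(* The mean of the exponentially tilted Bernoulli law grows with slope at
   most 1/4, the maximal variance of a Bernoulli variable. *)
Lemma tilted_mean_le (y : R) : 0 <= y -> p * expR y / bernoulli_mgf y <= p + y / 4.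
Proof.
move=> y0.
pose r (z : R) := z / 4 + p - p * expR z / bernoulli_mgf z.
have dr (z : R) : is_derive z 1 r (4^-1 - p * expR z * (1 - p) / bernoulli_mgf z ^+ 2).
  have Fz : bernoulli_mgf z != 0 by rewrite gt_eqF ?bernoulli_mgf_gt0.
  have dV := is_deriveV Fz (is_derive_bernoulli_mgf z).
  apply: is_derive_eq; rewrite /GRing.scale /=.
  by move: Fz; rewrite /bernoulli_mgf => Fz; field.
have : r 0 <= r y.
  apply: (@ger0_derive1_ndecry _ r 0 _ _ _ 0 y (lexx 0) y0) => [z _|z _|].
  - by case: (dr z).
  - rewrite derive1E; case: (dr z) => _ ->.
    have F0 := bernoulli_mgf_gt0 z; have e := expR_gt0 z.
    rewrite subr_ge0 ler_pdivrMr ?exprn_gt0 //.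
    move: F0; rewrite /bernoulli_mgf => F0; set b := p * expR z.
    have := sqr_ge0 (1 - p - b); nra.
  - by apply: derivable_within_continuous => z _; case: (dr z).
rewrite /r /bernoulli_mgf expR0 mulr1 subrK invr1 mulr1 mul0r add0r subrr.
lra.
Qed.

Lemma hoeffding_lemma (l : R) : 0 <= l -> bernoulli_mgf l <= expR (l * p + l ^+ 2 / 8).
Proof.
move=> l0.
pose f (z : R) := bernoulli_mgf z * expR (- (z * p + z ^+ 2 / 8)).
have df (z : R) : is_derive z 1 f
    (expR (- (z * p + z ^+ 2 / 8)) * (p * expR z - bernoulli_mgf z * (p + z / 4))).
  have dF := is_derive_bernoulli_mgf z.
  apply: is_derive_eq; rewrite /GRing.scale /=.
  by set E := expR (- _); field.
have : f l <= f 0.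
  apply: (@ler0_derive1_nincry _ f 0 _ _ _ 0 l (lexx 0) l0) => [z _|z|].
  - by case: (df z).
  - rewrite in_itv /= andbT => z0; rewrite derive1E; case: (df z) => _ ->.
    rewrite pmulr_rle0 ?expR_gt0 // subr_le0.
    rewrite [_ * (p + _)]mulrC -ler_pdivrMr ?bernoulli_mgf_gt0 //.
    exact: tilted_mean_le (ltW z0).
  - by apply: derivable_within_continuous => z _; case: (df z).
rewrite /f /bernoulli_mgf expR0 mulr1 subrK expr0n /= mul0r mul0r add0r oppr0.
by rewrite expR0 mulr1 expRN ler_pdivrMr ?expR_gt0 // mul1r.
Qed.

End HoeffdingLemma.

Section EmpiricalFrequency.
Variables (R : realType) (X : finType).
Implicit Types (P : X -> R) (F : {set X}).

Definition freq m (s : {ffun 'I_m -> X}) F : R := #|[set k | s k \in F]|%:R / m%:R.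

Definition probS P F : R := \sum_(a in F) P a.

Definition iid_prob m P (s : {ffun 'I_m -> X}) : R := \prod_(k < m) P (s k).

Definition deviates m (e : R) P (s : {ffun 'I_m -> X}) F := e <= freq s F - probS P F.

Lemma card_set_sum (I : finType) (Q : pred I) :
  #|[set k | Q k]|%:R = \sum_k (Q k)%:R :> R.
Proof.
rewrite -sum1_card natr_sum big_mkcond /=.
by apply: eq_bigr => k _; rewrite inE; case: (Q k).
Qed.

Lemma freq_setC m (s : {ffun 'I_m -> X}) F :
  (0 < m)%N -> freq s (~: F) = 1 - freq s F.
Proof.
move=> m0; rewrite /freq !card_set_sum.
have -> : \sum_(k < m) (s k \in ~: F)%:R = \sum_(k < m) (1 - (s k \in F)%:R) :> R.
  by apply: eq_bigr => k _; rewrite inE; case: (s k \in F); rewrite /= ?subr0 ?subrr.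
by rewrite sumrB sumr_const card_ord mulrBl divff // pnatr_eq0 -lt0n.
Qed.

Lemma probS_setC P F : is_distr P -> probS P (~: F) = 1 - probS P F.
Proof.
case=> _ P1; rewrite -P1 /probS (bigID (mem F) predT) /= addrC addrK.
by apply: eq_bigl => a; rewrite inE.
Qed.

Lemma probS_ge0 P F : is_distr P -> 0 <= probS P F.
Proof. by case=> P0 _; rewrite sumr_ge0. Qed.

Lemma probS_le1 P F : is_distr P -> probS P F <= 1.
Proof.
move=> hP; have := probS_ge0 (~: F) hP.
by rewrite probS_setC // subr_ge0.
Qed.

Lemma norm_freq_sub_lt m (s : {ffun 'I_m -> X}) P F d :
  (0 < m)%N -> is_distr P ->
  freq s F - probS P F < d -> freq s (~: F) - probS P (~: F) < d ->
  `|freq s F - probS P F| < d.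
Proof.
by move=> m0 hP lt_d; rewrite freq_setC // probS_setC // ltr_norml lt_d andbT; lra.
Qed.

Lemma sum_ffun_prod m (g : X -> R) :
  \sum_(s : {ffun 'I_m -> X}) \prod_(k < m) g (s k) = (\sum_a g a) ^+ m.
Proof. by rewrite -(bigA_distr_bigA (fun _ a => g a)) prodr_const card_ord. Qed.

Lemma sum_iid_prob m P : is_distr P -> \sum_(s : {ffun 'I_m -> X}) iid_prob P s = 1.
Proof. by case=> _ P1; rewrite sum_ffun_prod P1 expr1n. Qed.

Lemma sum_mul_expR_indicator P F (l : R) : is_distr P ->
  \sum_a P a * expR (l * (a \in F)%:R) = bernoulli_mgf (probS P F) l.
Proof.
move=> hP; rewrite (bigID (mem F)) /=.
rewrite (eq_bigr (fun a => P a * expR l)) => [|a aF]; last by rewrite aF mulr1.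
rewrite [X in _ + X](eq_bigr P) => [|a /negbTE ->]; last by rewrite mulr0 expR0 mulr1.
rewrite -mulr_suml -/(probS P F) /bernoulli_mgf.
have -> : \sum_(a | a \notin F) P a = probS P (~: F).
  by apply: eq_bigl => a; rewrite inE.
by rewrite probS_setC //; ring.
Qed.

(* Chernoff's bound with the optimal parameter l = 4 e. *)
Lemma hoeffding_freq m P F (e : R) : is_distr P -> (0 < m)%N -> 0 <= e ->
  \sum_(s : {ffun 'I_m -> X}) iid_prob P s * (deviates e P s F)%:R
    <= expR (- (2 * m%:R * e ^+ 2)).
Proof.
move=> hP m0 e0; set p := probS P F; set l := 4 * e.
have m_gt0 : 0 < m%:R :> R by rewrite ltr0n.
have p01 : 0 <= p <= 1 by rewrite probS_ge0 ?probS_le1.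
pose g a := P a * expR (l * (a \in F)%:R).
have markov s : iid_prob P s * (deviates e P s F)%:R <=
    expR (- (l * m%:R * (p + e))) * \prod_(k < m) g (s k).
  rewrite /g big_split /= mulrCA -expR_sum -mulr_sumr -card_set_sum -expRD.
  apply: ler_wpM2l; first by apply: prodr_ge0 => k _; case: hP.
  have [dev|_] := boolP (deviates e P s F); last by rewrite mulr0n expR_ge0.
  apply: le_trans (expR_ge1Dx _); rewrite mulr1n lerDl.
  move: dev; rewrite /deviates /freq -/p lerBrDl ler_pdivlMr // => dev.
  have l0 : 0 <= l by rewrite /l; lra.
  by have := ler_wpM2l l0 dev; lra.
apply: le_trans (ler_sum _ (fun s _ => markov s)) _.
rewrite -mulr_sumr sum_ffun_prod sum_mul_expR_indicator // -/p.
apply: (@le_trans _ _ (expR (- (l * m%:R * (p + e))) * expR (l * p + l ^+ 2 / 8) ^+ m)).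
  apply: ler_wpM2l; first exact: expR_ge0.
  apply: lerXn2r; rewrite ?nnegrE ?expR_ge0 ?(ltW (bernoulli_mgf_gt0 _ _)) //.
  by apply: hoeffding_lemma; rewrite // /l; lra.
rewrite -expRM_natl -expRD ler_expR le_eqVlt; apply/orP; left; apply/eqP.
by rewrite /l; field.
Qed.

End EmpiricalFrequency.

Arguments freq {R X m}.

Section TotalVariation.
Variables (R : realType) (X : finType).

Lemma sum_sub_le_scheffe (f g : X -> R) (B : {set X}) :
  \sum_(a in B) (f a - g a) <= \sum_(a in [set a | g a <= f a]) (f a - g a).
Proof.
rewrite big_mkcond [leRHS]big_mkcond /=; apply: ler_sum => a _.
by rewrite inE; case: (a \in B); case: (lerP (g a) (f a)) => h //; lra.
Qed.

Lemma tvdist_scheffe (P Q : X -> R) : is_distr P -> is_distr Q ->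
  tvdist P Q = probS P [set a | Q a <= P a] - probS Q [set a | Q a <= P a].
Proof.
move=> [_ P1] [_ Q1]; set B := [set a | Q a <= P a].
have norm_sub a : `|P a - Q a| = 2 * (if a \in B then P a - Q a else 0) - (P a - Q a).
  by rewrite inE; case: (lerP (Q a) (P a)) => h; lra.
rewrite /tvdist (eq_bigr _ (fun a _ => norm_sub a)) sumrB -mulr_sumr -big_mkcond.
rewrite [\sum_i _]sumrB P1 Q1 subrr subr0 mulrA mulVf ?mul1r ?pnatr_eq0 //.
by rewrite /probS -sumrB.
Qed.

End TotalVariation.

Section Discrimination.
Variables (R : realType) (X : finType) (M N n : nat) (P : 'I_M -> X -> R).
Variables (t : trainT X M N) (x : testT X n) (i : 'I_M) (d e : R).
Hypothesis distrP : forall k, is_distr (P k).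
Hypothesis e_ge0 : 0 <= e.
Hypothesis separated : forall k l, k != l -> 4 * d + 2 * e <= tvdist (P k) (P l).
Hypothesis train_close : forall j F, `|TempS R t j F - probS (P j) F| < d.
Hypothesis test_close : forall k l : 'I_M, (k < l)%N ->
  `|mun R x (Aset R t k l) - probS (P i) (Aset R t k l)| < e.

Lemma score_ge (k l j : 'I_M) : (k < l)%N ->
  `|TempS R t j (Aset R t k l) - mun R x (Aset R t k l)| <= score R t x j.
Proof. by move=> kl; apply: (bigmax_sup k) => //; apply: (bigmax_sup l). Qed.

Lemma score_true_lt : score R t x i < d + e.
Proof.
have d_gt0 : 0 < d := le_lt_trans (normr_ge0 _) (train_close i [set: X]).
apply: bigmax_lt => [|k _]; first exact: ltr_wpDr.
apply: bigmax_lt => [|l kl]; first exact: ltr_wpDr.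
set A := Aset R t k l.
have T_close := train_close i A.
have mu_close : `|probS (P i) A - mun R x A| < e by rewrite distrC; exact: test_close.
by apply: le_lt_trans (ler_distD (probS (P i) A) _ _) _; lra.
Qed.

(* The empirical Scheffe set A_{k,l} separates T_k from T_l at least as well
   as the true Scheffe set of P_k and P_l does. *)
Lemma Aset_gap (k l : 'I_M) : (k < l)%N ->
  2 * d + 2 * e < `|TempS R t k (Aset R t k l) - TempS R t l (Aset R t k l)|.
Proof.
move=> kl; have kl' : k != l by rewrite neq_ltn kl.
set B := [set a | P l a <= P k a].
have := sum_sub_le_scheffe (Temp R t k) (Temp R t l) B.
rewrite !sumrB -/(TempS R t k B) -/(TempS R t l B).
rewrite -/(TempS R t k (Aset R t k l)) -/(TempS R t l (Aset R t k l)) => emp_gap.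
have := separated kl'; rewrite tvdist_scheffe // -/B => true_gap.
have /ltr_normlP[? ?] := train_close k B; have /ltr_normlP[? ?] := train_close l B.
by apply: lt_le_trans (ler_norm _); lra.
Qed.

Lemma score_true_lt_other j : j != i -> score R t x i < score R t x j.
Proof.
move=> ji.
have [k [l [kl gap close]]] : exists k l : 'I_M, [/\ (k < l)%N,
    2 * d + 2 * e < `|TempS R t i (Aset R t k l) - TempS R t j (Aset R t k l)| &
    `|mun R x (Aset R t k l) - probS (P i) (Aset R t k l)| < e].
  case: (ltngtP i j) => [ij|ij|/val_inj ij]; last by rewrite ij eqxx in ji.
  - by exists i, j; split; [|exact: Aset_gap|exact: test_close].
  - by exists j, i; split; [|rewrite distrC; exact: Aset_gap|exact: test_close].
apply: lt_le_trans (score_ge j kl).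
set A := Aset R t k l.
have := train_close i A; have := score_true_lt.
have := ler_distD (mun R x A) (TempS R t i A) (TempS R t j A).
have := ler_distD (probS (P i) A) (TempS R t i A) (mun R x A).
by rewrite (distrC (mun R x A)) (distrC (probS (P i) A)); lra.
Qed.

Lemma DGL_rule_correct (dec : trainT X M N -> testT X n -> 'I_M) :
  DGL_rule R dec -> dec t x = i.
Proof.
move=> rule; apply/eqP/negPn/negP => ne.
by have := rule t x i; rewrite leNgt (score_true_lt_other ne).
Qed.

End Discrimination.

Lemma indicator_exists_le (R : realType) (I : finType) (Q : pred I) :
  [exists k, Q k]%:R <= \sum_k (Q k)%:R :> R.
Proof.
case: existsP => [[k Qk]|_]; last by rewrite sumr_ge0 // => k _; rewrite ler0n.
by rewrite (bigD1 k) //= Qk lerDl sumr_ge0 // => j _; rewrite ler0n.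
Qed.

Lemma sum_neq_ord (R : realType) (M : nat) :
  \sum_(k < M) \sum_(l < M) (l != k)%:R = M%:R * M.-1%:R :> R.
Proof.
have row (k : 'I_M) : \sum_(l < M) (l != k)%:R = M.-1%:R :> R.
  rewrite -card_set_sum -[M in M.-1]card_ord -(cardsC1 k).
  by congr (_%:R); apply: eq_card => l; rewrite !inE.
by rewrite (eq_bigr _ (fun k _ => row k)) sumr_const card_ord mulr_natl.
Qed.

Section ErrorProbability.
Variables (R : realType) (X : finType) (M N n : nat) (P : 'I_M -> X -> R).
Hypothesis distrP : forall k, is_distr (P k).

Definition class_error (dec : trainT X M N -> testT X n -> 'I_M) (i : 'I_M) : R :=
  \sum_(t : trainT X M N) \sum_(x : testT X n)
    (if dec t x != i then Ptrain P t * Ptest P i x else 0).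

Definition train_misfit (d : R) (t : trainT X M N) :=
  [exists j, [exists F, deviates d (P j) (t j) F]].

Definition test_misfit (e : R) (i : 'I_M) (t : trainT X M N) (x : testT X n) :=
  [exists k : 'I_M, [exists l : 'I_M, (k < l)%N &&
    (deviates e (P i) x (Aset R t k l) || deviates e (P i) x (~: Aset R t k l))]].

Lemma TempS_freq (t : trainT X M N) j F : TempS R t j F = freq (t j) F.
Proof.
rewrite /TempS /Temp -mulr_suml; congr (_ / _).
rewrite card_set_sum; under eq_bigr do rewrite card_set_sum.
rewrite exchange_big /=; apply: eq_bigr => k _.
have [tF|tNF] := boolP (t j k \in F).
  rewrite (bigD1 (t j k)) //= eqxx big1 ?addr0 // => a /andP[_ ta].
  by rewrite eq_sym (negbTE ta).
by rewrite big1 // => a aF; case: eqP => // ta; rewrite ta aF in tNF.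
Qed.

Lemma Ptrain_ge0 (t : trainT X M N) : 0 <= Ptrain P t.
Proof. by apply: prodr_ge0 => j _; apply: prodr_ge0 => k _; case: (distrP j). Qed.

Lemma Ptest_ge0 i (x : testT X n) : 0 <= Ptest P i x.
Proof. by apply: prodr_ge0 => k _; case: (distrP i). Qed.

Lemma sum_Ptrain_marginal j (f : {ffun 'I_N -> X} -> R) :
  \sum_(t : trainT X M N) Ptrain P t * f (t j) =
  \sum_(s : {ffun 'I_N -> X}) iid_prob (P j) s * f s.
Proof.
pose h k s := iid_prob (P k) s * (if k == j then f s else 1).
have -> : \sum_(t : trainT X M N) Ptrain P t * f (t j) =
          \sum_(t : trainT X M N) \prod_k h k (t k).
  apply: eq_bigr => t _; rewrite /h big_split /=; congr (_ * _).
  by rewrite (bigD1 j) //= eqxx big1 ?mulr1 // => k /negbTE ->.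
rewrite -(bigA_distr_bigA h) /= (bigD1 j) //= [X in _ * X]big1 ?mulr1.
  by apply: eq_bigr => s _; rewrite /h eqxx.
move=> k /negbTE kj; rewrite /h kj.
under eq_bigr do rewrite mulr1.
exact: sum_iid_prob.
Qed.

Lemma sum_Ptrain : \sum_(t : trainT X M N) Ptrain P t = 1.
Proof.
rewrite -(bigA_distr_bigA (fun k s => iid_prob (P k) s)) /=.
by rewrite big1 // => k _; exact: sum_iid_prob.
Qed.

Section FixedClassifier.
Variables (dec : trainT X M N -> testT X n -> 'I_M) (i : 'I_M) (d e : R).
Hypotheses (N_gt0 : (0 < N)%N) (n_gt0 : (0 < n)%N) (d_ge0 : 0 <= d) (e_ge0 : 0 <= e).
Hypothesis separated : forall k l, k != l -> 4 * d + 2 * e <= tvdist (P k) (P l).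
Hypothesis rule : DGL_rule R dec.

Lemma misclassified_misfit t x :
  dec t x != i -> train_misfit d t || test_misfit e i t x.
Proof.
apply: contraR => /norP[fitT fitX]; apply/eqP.
have train_fit j F : ~~ deviates d (P j) (t j) F.
  by move: fitT; apply: contraNN => dev; apply/existsP; exists j; apply/existsP; exists F.
have test_fit (k l : 'I_M) : (k < l)%N -> ~~ deviates e (P i) x (Aset R t k l) &&
                                 ~~ deviates e (P i) x (~: Aset R t k l).
  move=> kl; rewrite -negb_or; move: fitX; apply: contraNN => dev.
  by apply/existsP; exists k; apply/existsP; exists l; rewrite kl.
apply: (DGL_rule_correct distrP e_ge0 separated _ _ rule).
- move=> j F; rewrite TempS_freq; apply: norm_freq_sub_lt => //.
  + by rewrite ltNge; exact: train_fit.
  + by rewrite ltNge; exact: train_fit.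
- move=> k l kl; have /andP[] := test_fit k l kl; rewrite /deviates -!ltNge.
  exact: norm_freq_sub_lt.
Qed.

Lemma train_misfit_prob_le :
  \sum_(t : trainT X M N) Ptrain P t * (train_misfit d t)%:R <=
  M%:R * 2 ^+ #|X| * expR (- (2 * N%:R * d ^+ 2)).
Proof.
apply: (@le_trans _ _ (\sum_(t : trainT X M N) Ptrain P t *
                        \sum_j \sum_F (deviates d (P j) (t j) F)%:R)).
  apply: ler_sum => t _; apply: ler_wpM2l; first exact: Ptrain_ge0.
  apply: le_trans (indicator_exists_le _ _) _; apply: ler_sum => j _.
  exact: indicator_exists_le.
under eq_bigr do rewrite mulr_sumr; rewrite exchange_big /=.
apply: (@le_trans _ _ (\sum_(j < M) \sum_(F : {set X}) expR (- (2 * N%:R * d ^+ 2)))).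
  apply: ler_sum => j _; under eq_bigr do rewrite mulr_sumr.
  rewrite exchange_big /=; apply: ler_sum => F _.
  rewrite (sum_Ptrain_marginal j (fun s => (deviates d (P j) s F)%:R)).
  exact: hoeffding_freq.
have card_sets : #|{set X}| = (2 ^ #|X|)%N.
  by rewrite -[LHS]cardsT -powersetT card_powerset cardsT.
set K := expR _; rewrite !sumr_const card_ord card_sets -mulrnA -[K *+ _]mulr_natl.
by rewrite natrM natrX [2 ^+ _ * _]mulrC.
Qed.

Lemma test_misfit_prob_le t :
  \sum_(x : testT X n) Ptest P i x * (test_misfit e i t x)%:R <=
  M%:R * M.-1%:R * (2 * expR (- (2 * n%:R * e ^+ 2))).
Proof.
set K := expR _.
pose dev2 (k l : 'I_M) (x : testT X n) : R := (deviates e (P i) x (Aset R t k l))%:R +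
                       (deviates e (P i) x (~: Aset R t k l))%:R.
have pair_le (k l : 'I_M) : \sum_(x : testT X n) Ptest P i x * dev2 k l x <= 2 * K.
  under eq_bigr do rewrite mulrDr.
  by rewrite big_split [2 * K]mulr_natl mulr2n; apply: lerD; exact: hoeffding_freq.
apply: (@le_trans _ _ (\sum_(x : testT X n) Ptest P i x *
                        \sum_k \sum_l (l != k)%:R * dev2 k l x)).
  apply: ler_sum => x _; apply: ler_wpM2l; first exact: Ptest_ge0.
  apply: le_trans (indicator_exists_le _ _) _; apply: ler_sum => k _.
  apply: le_trans (indicator_exists_le _ _) _; apply: ler_sum => l _.
  rewrite /dev2; case: ltnP => [kl|_] /=; last by rewrite mulr0n mulr_ge0 ?addr_ge0 ?ler0n.
  rewrite eq_sym neq_ltn kl /= mulr1n mul1r.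
  by case: deviates; case: deviates; rewrite /= ?mulr1n ?mulr0n; lra.
rewrite -sum_neq_ord mulr_suml.
under eq_bigr do rewrite mulr_sumr; rewrite exchange_big /=; apply: ler_sum => k _.
rewrite mulr_suml.
under eq_bigr do rewrite mulr_sumr; rewrite exchange_big /=; apply: ler_sum => l _.
under eq_bigr do rewrite mulrCA; rewrite -mulr_sumr.
by apply: ler_wpM2l; [exact: ler0n | exact: pair_le].
Qed.

Lemma class_error_le :
  class_error dec i <= M%:R * 2 ^+ #|X| * expR (- (2 * N%:R * d ^+ 2)) +
                       M%:R * M.-1%:R * (2 * expR (- (2 * n%:R * e ^+ 2))).
Proof.
have misfit t x : dec t x != i ->
    1 <= (train_misfit d t)%:R + (test_misfit e i t x)%:R :> R.
  by move=> /misclassified_misfit /orP[] ->; rewrite mulr1n ?lerDl ?lerDr ler0n.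
apply: (@le_trans _ _ (\sum_(t : trainT X M N) \sum_(x : testT X n)
    Ptrain P t * Ptest P i x * ((train_misfit d t)%:R + (test_misfit e i t x)%:R))).
  apply: ler_sum => t _; apply: ler_sum => x _.
  have PtPx := mulr_ge0 (Ptrain_ge0 t) (Ptest_ge0 i x).
  case: ifP => [/misfit ?|_]; last by rewrite mulr_ge0 // addr_ge0 ?ler0n.
  by rewrite -[leLHS]mulr1 ler_wpM2l.
under eq_bigr do under eq_bigr do rewrite mulrDr.
under eq_bigr do rewrite big_split; rewrite big_split /=; apply: lerD.
  under eq_bigr do under eq_bigr do rewrite mulrAC.
  under eq_bigr do rewrite -mulr_sumr sum_iid_prob // mulr1.
  exact: train_misfit_prob_le.
apply: (@le_trans _ _ (\sum_(t : trainT X M N) Ptrain P t *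
                        (M%:R * M.-1%:R * (2 * expR (- (2 * n%:R * e ^+ 2)))))).
  apply: ler_sum => t _; under eq_bigr do rewrite -mulrA; rewrite -mulr_sumr.
  by apply: ler_wpM2l; [exact: Ptrain_ge0 | exact: test_misfit_prob_le].
by rewrite -mulr_suml sum_Ptrain mul1r.
Qed.

End FixedClassifier.
End ErrorProbability.

Section Separation.
Variables (R : realType) (X : finType) (M : nat) (P : 'I_M -> X -> R).

Lemma tvdist_ge0 (k l : 'I_M) : 0 <= tvdist (P k) (P l).
Proof. by rewrite mulr_ge0 ?invr_ge0 // sumr_ge0. Qed.

Lemma Dmin_ge0 : 0 <= Dmin P.
Proof. by apply: le_bigmin => // k _; apply: le_bigmin => // l _; exact: tvdist_ge0. Qed.

Lemma Dmin_le_tvdist (k l : 'I_M) : k != l -> Dmin P <= tvdist (P k) (P l).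
Proof.
move=> kl; apply: le_trans (bigmin_le _ k _) _.
by apply: bigmin_le_cond; rewrite eq_sym.
Qed.

End Separation.

Lemma err_CL_le (R : realType) (X : finType) (M N n : nat) (P : 'I_M -> X -> R)
    (pi : 'I_M -> R) (dec : trainT X M N -> testT X n -> 'I_M) (B : R) :
  (forall i, 0 <= pi i) -> \sum_i pi i = 1 ->
  (forall i, class_error P dec i <= B) -> err_CL P pi dec <= B.
Proof.
move=> pi_ge0 pi1 le_B; apply: (@le_trans _ _ (\sum_i pi i * B)).
  by apply: ler_sum => i _; apply: ler_wpM2l; [exact: pi_ge0 | exact: le_B].
by rewrite -mulr_suml pi1 mul1r.
Qed.

Lemma is_distr_card_gt0 (R : realType) (X : finType) (P : X -> R) :
  is_distr P -> (0 < #|X|)%N.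
Proof.
case=> _ P1; case: (pickP (@predT X)) => [a _|none]; first by apply/card_gt0P; exists a.
by move: P1; rewrite big_pred0 // => /eqP; rewrite eq_sym oner_eq0.
Qed.

Lemma le_expR_of_ln (R : realType) (a y : R) : 0 < a -> ln a <= y -> a <= expR y.
Proof. by move=> a_gt0; rewrite -ler_expR lnK. Qed.

(* Each term of the union bound is absorbed by one argument of the maximum:
   2^m by m ln 2, and 2 (M - 1) by 2 ln (M - 1) when M > 2 (by 2^m >= 2 else). *)
Lemma union_bound_le_expR (R : realType) (M m n : nat) (K : R) :
  (2 <= M)%N -> (0 < m)%N -> (0 < n)%N -> 0 <= K ->
  M%:R * 2 ^+ m * K + M%:R * M.-1%:R * (2 * K) <=
  2 * M%:R * (K * expR (n%:R * Num.max (2 * ln M.-1%:R / n%:R) (m%:R * ln 2 / n%:R))).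
Proof.
move=> M2 m_gt0 n_gt0 K_ge0; set Y := expR _.
have n_pos : 0 < n%:R :> R by rewrite ltr0n.
have M1_gt0 : 0 < M.-1%:R :> R by rewrite ltr0n -ltnS prednK // ltnW.
have two_le : 2 <= 2 ^+ m :> R by rewrite -natrX ler_nat -{1}(expn1 2) leq_pexp2l.
have pow_le : 2 ^+ m <= Y.
  apply: le_expR_of_ln; first exact: exprn_gt0.
  by rewrite lnXn // -[ln _ *+ _]mulr_natl [n%:R * _]mulrC -ler_pdivrMr // le_max lexx orbT.
have sqr_le : M.-1%:R ^+ 2 <= Y.
  apply: le_expR_of_ln; first exact: exprn_gt0.
  by rewrite lnXn // -[ln _ *+ _]mulr_natl [n%:R * _]mulrC -ler_pdivrMr // le_max lexx.
have pred_le : 2 * M.-1%:R <= Y.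
  have [M1_ge2|M1_lt2] := leqP 2 M.-1.
    have : 2 <= M.-1%:R :> R by rewrite ler_nat.
    by move=> ?; apply: le_trans sqr_le; nra.
  have -> : M.-1 = 1%N by apply/eqP; rewrite eqn_leq -ltnS M1_lt2 -ltnS prednK // ltnW.
  by apply: le_trans pow_le; rewrite mulr1.
have MK_ge0 : 0 <= M%:R * K by rewrite mulr_ge0 ?ler0n.
by have := ler_wpM2l MK_ge0 (lerD pow_le pred_le); lra.
Qed.

Unset Implicit Arguments.
Theorem corollary1 (R : realType) (X : finType) (M N n : nat)
  (P : 'I_M -> X -> R) (pi : 'I_M -> R)
  (dec : trainT X M N -> testT X n -> 'I_M) :
  (2 <= M)%N -> (1 <= n)%N -> (1 <= N)%N ->
  (forall i, @is_distr R X (P i)) ->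
  (forall i, 0 < pi i) -> \sum_(i < M) pi i = 1 ->
  @DGL_rule R X M N n dec ->
  let alpha := N%:R / n%:R : R in
  let D := @Dmin R X M P in
  @err_CL R X M N n P pi dec <=
    2 * M%:R * expR (- (n%:R *
      (alpha * D ^+ 2 / (2 * (2 + Num.sqrt alpha) ^+ 2)
       - Num.max (2 * ln (M.-1)%:R / n%:R) (#|X|%:R * ln 2 / n%:R)))).
Proof.
move=> M2 n_gt0 N_gt0 distrP pi_gt0 pi1 rule; cbv zeta.
set alpha := N%:R / n%:R; set D := Dmin P.
have n_neq0 : n%:R != 0 :> R by rewrite pnatr_eq0 -lt0n.
have alpha_gt0 : 0 < alpha by rewrite divr_gt0 ?ltr0n.
set s := Num.sqrt alpha; have s_ge0 : 0 <= s := sqrtr_ge0 alpha.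
set d := D / (2 * (2 + s)).
have d_ge0 : 0 <= d by rewrite divr_ge0 ?Dmin_ge0 ?mulr_ge0 ?addr_ge0.
have sep k l : k != l -> 4 * d + 2 * (s * d) <= tvdist (P k) (P l).
  have -> : 4 * d + 2 * (s * d) = D by rewrite /d; field; lra.
  exact: Dmin_le_tvdist.
apply: err_CL_le => [i|//|i]; first exact: ltW.
apply: le_trans (class_error_le distrP i N_gt0 n_gt0 d_ge0 (mulr_ge0 s_ge0 d_ge0) sep rule) _.
have -> : 2 * n%:R * (s * d) ^+ 2 = 2 * N%:R * d ^+ 2.
  by rewrite exprMn sqr_sqrtr ?ltW // /alpha; field.
set mx := Num.max _ _.
have -> : - (n%:R * (alpha * D ^+ 2 / (2 * (2 + s) ^+ 2) - mx)) =
          - (2 * N%:R * d ^+ 2) + n%:R * mx by rewrite /d /alpha; field; lra.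
rewrite expRD; apply: union_bound_le_expR; rewrite ?expR_ge0 //.
exact: is_distr_card_gt0 (distrP (Ordinal (ltnW M2))).
Qed.
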